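(* Let $R,S$ be finite nonempty sets, $k$ a positive integer, $p_r>0$ ($r\in R$), $T=\sum_{r\in R}p_r$. Let $d_r\ge0$ ($r\in R$), not all zero, be a distribution of distances, with $\alpha=\frac{\sum_{r\in R}p_rd_r}{\sum_{r\in R}p_rd_r^2}$ and population-weighted mean $\mu_D=\frac1T\sum_{r\in R}p_rd_r$. Let $\epsilon<0$ and $\kappa=\alpha\epsilon$. Let $U\subseteq S$, $c_s\ge0$ for $s\in U$, and let $X$ be the set of $\mathbf x\in\{0,1\}^S$ with $\sum_{s\in S}x_s=k$; let $\sigma^{max}=\max_{\mathbf x\in X}\sum_{s\in U}c_sx_s$. If $\sigma^{max}\le\mu_D$, then for every $\mathbf x\in X$, \[ q=-\kappa\sum_{s\in U}c_sx_s\le|\epsilon|. \]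
   Context: $\epsilon$ is the Kolm–Pollak inequality-aversion parameter (negative for undesirable quantities like distance) and $\alpha$ its normalizing factor computed from the distribution $D=\{d_r\}$; $q$ is the argument of the exponential in the penalty term of the penalized Kolm–Pollak facility location model, where $x_s$ indicates opening a facility at $s$ and $c_s$ is a distance penalty on less desirable location $s\in U$. *)

From mathcomp Require Import all_boot all_order all_algebra.
Set Implicit Arguments. Unset Strict Implicit. Unset Printing Implicit Defensive.
Import Order.TTheory GRing.Theory Num.Theory.
Local Open Scope ring_scope.

Definition kp_alpha (F : realFieldType) (Rset : finType) (p d : Rset -> F) : F :=
  (\sum_(r : Rset) p r * d r) / (\sum_(r : Rset) p r * d r ^+ 2).

Definition pop_mean (F : realFieldType) (Rset : finType) (p d : Rset -> F) : F :=
  (\sum_(r : Rset) p r * d r) / (\sum_(r : Rset) p r).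

Definition feasible (Sset : finType) (k : nat) (x : {ffun Sset -> bool}) : bool :=
  (\sum_(s : Sset) (x s : nat))%N == k.

Definition penalty (F : realFieldType) (Sset : finType) (U : {set Sset})
  (c : Sset -> F) (x : {ffun Sset -> bool}) : F :=
  \sum_(s in U) c s * (x s)%:R.

(* sigma^max = max_{x in X} sum_{s in U} c_s x_s
   (fold of max starting at 0; since c >= 0 every penalty is >= 0, so this is
    exactly the maximum whenever X is nonempty) *)
Definition sigma_max (F : realFieldType) (Sset : finType) (k : nat)
  (U : {set Sset}) (c : Sset -> F) : F :=
  \big[Num.max/0]_(x : {ffun Sset -> bool} | feasible k x) penalty U c x.

(* The Kolm-Pollak factor satisfies alpha * mu_D = (sum p d)^2 / ((sum p d^2)(sum p)),
   which is at most 1 by the weighted Cauchy-Schwarz inequality.  Hence every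
   penalty, being at most sigma^max <= mu_D, satisfies alpha * penalty <= 1, and
   q = (alpha * penalty) * |eps| <= |eps|. *)
From mathcomp Require Import all_boot all_order all_algebra.
From mathcomp Require Import ring.

Set Implicit Arguments.
Unset Strict Implicit.
Unset Printing Implicit Defensive.
Import Order.TTheory GRing.Theory Num.Theory.
Local Open Scope ring_scope.

Section WeightedSums.

Variables (R : realDomainType) (I : finType) (p d : I -> R).
Hypothesis p_ge0 : forall i, 0 <= p i.

Let A := \sum_i p i * d i.
Let B := \sum_i p i * d i ^+ 2.
Let T := \sum_i p i.

Lemma sum_weighted_sqr_centered :
  \sum_i p i * (T * d i - A) ^+ 2 = T * (B * T - A ^+ 2).
Proof.
rewrite (eq_bigr (fun i => p i * d i ^+ 2 * T ^+ 2 - p i * d i * (T * A *+ 2)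
                           + p i * A ^+ 2)); last by move=> i _; ring.
by rewrite big_split sumrB /= -!mulr_suml -/A -/B -/T; ring.
Qed.

Lemma weighted_cauchy_schwarz : A ^+ 2 <= B * T.
Proof.
have T_ge0 : 0 <= T by apply: sumr_ge0 => i _; exact: p_ge0.
have [T0 | T_gt0] := eqVneq T 0.
  have A0 : A = 0.
    by rewrite /A big1 // => i _; rewrite (psumr_eq0P _ T0) ?mul0r.
  by rewrite A0 T0 expr0n mulr0.
rewrite -subr_ge0 -(@pmulr_rge0 _ T); last by rewrite lt_def T_gt0.
rewrite -sum_weighted_sqr_centered.
by apply: sumr_ge0 => i _; rewrite mulr_ge0 ?p_ge0 ?sqr_ge0.
Qed.

End WeightedSums.

Lemma kp_alpha_ge0 (F : realFieldType) (I : finType) (p d : I -> F) :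
  (forall i, 0 <= p i) -> (forall i, 0 <= d i) -> 0 <= kp_alpha p d.
Proof.
move=> p_ge0 d_ge0.
by rewrite divr_ge0 ?sumr_ge0 // => i _; rewrite mulr_ge0 ?p_ge0 ?d_ge0 ?sqr_ge0.
Qed.

(* If the denominator vanishes, the product is [0] by the convention [x / 0 = 0]. *)
Lemma kp_alpha_mul_pop_mean_le1 (F : realFieldType) (I : finType) (p d : I -> F) :
  (forall i, 0 <= p i) -> kp_alpha p d * pop_mean p d <= 1.
Proof.
move=> p_ge0; rewrite /kp_alpha /pop_mean mulf_div -expr2.
set A := \sum_i _; set B := \sum_i _; set T := \sum_i _.
have BT_ge0 : 0 <= B * T.
  by rewrite mulr_ge0 ?sumr_ge0 // => i _; rewrite mulr_ge0 ?p_ge0 ?sqr_ge0.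
have [-> | BT_neq0] := eqVneq (B * T) 0; first by rewrite invr0 mulr0.
rewrite ler_pdivrMr ?mul1r; first exact: weighted_cauchy_schwarz.
by rewrite lt_def BT_neq0.
Qed.

Lemma penalty_le_sigma_max (F : realFieldType) (S : finType) (k : nat)
    (U : {set S}) (c : S -> F) (x : {ffun S -> bool}) :
  feasible k x -> penalty U c x <= sigma_max k U c.
Proof. by move=> fx; rewrite /sigma_max (bigD1 x) //= le_max lexx. Qed.

Theorem proposition5 (F : realFieldType) (Rset Sset : finType) (k : nat)
  (p d : Rset -> F) (eps : F) (U : {set Sset}) (c : Sset -> F) :
  (0 < #|Rset|)%N -> (0 < #|Sset|)%N -> (0 < k)%N ->
  (forall r, 0 < p r) ->
  (forall r, 0 <= d r) -> (exists r, d r != 0) ->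
  eps < 0 ->
  (forall s, s \in U -> 0 <= c s) ->
  sigma_max k U c <= pop_mean p d ->
  forall x : {ffun Sset -> bool}, feasible k x ->
    - (kp_alpha p d * eps) * penalty U c x <= `|eps|.
Proof.
move=> _ _ _ p_gt0 d_ge0 _ eps_lt0 _ sigma_le_mean x fx.
have p_ge0 r : 0 <= p r by exact: ltW.
have alpha_ge0 := kp_alpha_ge0 p_ge0 d_ge0.
have alpha_penalty_le1 : kp_alpha p d * penalty U c x <= 1.
  apply: le_trans (kp_alpha_mul_pop_mean_le1 d p_ge0).
  by rewrite ler_wpM2l // (le_trans (penalty_le_sigma_max U c fx)).
rewrite ltr0_norm // mulNr mulrAC -mulrN.
by rewrite ler_piMl // oppr_ge0 ltW.
Qed.
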